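(* The class of doubly ordered frames is not modally definable: there is no set of formulas of the bimodal language (with two modal operators interpreted by the two relations of a frame) whose class of validating frames $\langle X, R_1, R_2\rangle$ is exactly the class of doubly ordered frames.
   Context: A doubly ordered frame is a structure $\langle X, \leq_1, \leq_2\rangle$ where $\leq_1,\leq_2$ are quasiorders (reflexive and transitive binary relations) on $X$ such that $x \leq_1 y$ and $x \leq_2 y$ together imply $x = y$. Frames here are Kripke frames $\langle X, R_1, R_2\rangle$ with two binary relations; a class of such frames is modally definable if it is the class of all frames validating some set of formulas of the basic modal language with two modalities, the $i$-th interpreted via $R_i$. *)

Inductive formula : Type :=
  | Var  : nat -> formula
  | Bot  : formula
  | Imp  : formula -> formula -> formula
  | Box1 : formula -> formula
  | Box2 : formula -> formula.

Definition Neg (p : formula) : formula := Imp p Bot.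
Definition Top : formula := Neg Bot.
Definition Or  (p q : formula) : formula := Imp (Neg p) q.
Definition And (p q : formula) : formula := Neg (Imp p (Neg q)).
Definition Dia1 (p : formula) : formula := Neg (Box1 (Neg p)).
Definition Dia2 (p : formula) : formula := Neg (Box2 (Neg p)).

Fixpoint sat {X : Type} (R1 R2 : X -> X -> Prop) (V : nat -> X -> Prop)
    (x : X) (phi : formula) : Prop :=
  match phi with
  | Var n => V n x
  | Bot => False
  | Imp p q => sat R1 R2 V x p -> sat R1 R2 V x q
  | Box1 p => forall y, R1 x y -> sat R1 R2 V y p
  | Box2 p => forall y, R2 x y -> sat R1 R2 V y p
  end.

Definition valid_frame {X : Type} (R1 R2 : X -> X -> Prop) (phi : formula) : Prop :=
  forall (V : nat -> X -> Prop) (x : X), sat R1 R2 V x phi.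

Definition quasiorder {X : Type} (R : X -> X -> Prop) : Prop :=
  (forall x, R x x) /\ (forall x y z, R x y -> R y z -> R x z).

Definition doubly_ordered {X : Type} (R1 R2 : X -> X -> Prop) : Prop :=
  quasiorder R1 /\ quasiorder R2 /\
  (forall x y, R1 x y -> R2 x y -> x = y).

(* Validity of bimodal formulas is preserved under surjective bounded
   morphisms (p-morphic images), so every modally definable class is closed
   under them.  The fork  leaf1 <-R1- root -R2-> leaf2  is doubly ordered, yet
   identifying its two leaves yields the two-element chain with both relations
   equal to <=, where 0 <= 1 holds in both relations although 0 <> 1. *)

From Stdlib Require Import Bool.

Section BoundedMorphism.

Context {X Y : Type}.

Definition zigzag (R : X -> X -> Prop) (S : Y -> Y -> Prop) (f : X -> Y) : Prop :=
  (forall x y, R x y -> S (f x) (f y)) /\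
  (forall x v, S (f x) v -> exists y, R x y /\ f y = v).

Lemma zigzag_box (R : X -> X -> Prop) (S : Y -> Y -> Prop) (f : X -> Y)
    (P : X -> Prop) (Q : Y -> Prop) :
  zigzag R S f -> (forall x, P x <-> Q (f x)) ->
  forall x, (forall y, R x y -> P y) <-> (forall v, S (f x) v -> Q v).
Proof.
  intros [forth back] PQ x; split.
  - intros HP v Hv.
    destruct (back x v Hv) as [y [Hy <-]].
    now apply PQ, HP.
  - intros HQ y Hy.
    now apply PQ, HQ, forth.
Qed.

Variables (R1 R2 : X -> X -> Prop) (S1 S2 : Y -> Y -> Prop) (f : X -> Y).
Hypotheses (f_zigzag1 : zigzag R1 S1 f) (f_zigzag2 : zigzag R2 S2 f).

Lemma sat_zigzag (V : nat -> Y -> Prop) (phi : formula) :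
  forall x, sat R1 R2 (fun n w => V n (f w)) x phi <-> sat S1 S2 V (f x) phi.
Proof.
  induction phi as [n| |p IHp q IHq|p IHp|p IHp]; intro x; simpl.
  - tauto.
  - tauto.
  - specialize (IHp x); specialize (IHq x); tauto.
  - exact (zigzag_box _ _ _ _ _ f_zigzag1 IHp x).
  - exact (zigzag_box _ _ _ _ _ f_zigzag2 IHp x).
Qed.

Lemma valid_zigzag_image (phi : formula) :
  (forall v, exists x, f x = v) ->
  valid_frame R1 R2 phi -> valid_frame S1 S2 phi.
Proof.
  intros f_onto Hphi V v.
  destruct (f_onto v) as [x <-].
  now apply sat_zigzag.
Qed.

End BoundedMorphism.

Inductive fork_world : Type := root | leaf1 | leaf2.

Definition fork1 (x y : fork_world) : Prop := x = y \/ (x = root /\ y = leaf1).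
Definition fork2 (x y : fork_world) : Prop := x = y \/ (x = root /\ y = leaf2).

Lemma fork_doubly_ordered : doubly_ordered fork1 fork2.
Proof.
  unfold doubly_ordered, quasiorder, fork1, fork2.
  split; [|split].
  - split; [auto|]. intros x y z [->|[-> ->]] [->|[H ->]]; auto; discriminate.
  - split; [auto|]. intros x y z [->|[-> ->]] [->|[H ->]]; auto; discriminate.
  - intros x y [->|[-> ->]] [H|[_ H]]; auto; discriminate.
Qed.

Definition merge_leaves (w : fork_world) : bool :=
  match w with root => false | _ => true end.

Lemma merge_leaves_surjective : forall b, exists w, merge_leaves w = b.
Proof. intros []; [exists leaf1 | exists root]; reflexivity. Qed.

Lemma merge_leaves_zigzag1 : zigzag fork1 Bool.le merge_leaves.
Proof.
  split.
  - intros x y [->|[-> ->]]; [destruct y|]; reflexivity.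
  - intros [] []; simpl; try discriminate; intros _.
    + now exists leaf1; split; [right|].
    + now exists root; split; [left|].
    + now exists leaf1; split; [left|].
    + now exists leaf2; split; [left|].
Qed.

Lemma merge_leaves_zigzag2 : zigzag fork2 Bool.le merge_leaves.
Proof.
  split.
  - intros x y [->|[-> ->]]; [destruct y|]; reflexivity.
  - intros [] []; simpl; try discriminate; intros _.
    + now exists leaf2; split; [right|].
    + now exists root; split; [left|].
    + now exists leaf1; split; [left|].
    + now exists leaf2; split; [left|].
Qed.

Lemma not_doubly_ordered_bool_le : ~ doubly_ordered Bool.le Bool.le.
Proof.
  intros [_ [_ antisym]].
  discriminate (antisym false true I I).
Qed.

Theorem mainTheorem2 :
  ~ exists Gamma : formula -> Prop,
      forall (X : Type) (R1 R2 : X -> X -> Prop),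
        (forall phi, Gamma phi -> valid_frame R1 R2 phi) <-> doubly_ordered R1 R2.
Proof.
  intros [Gamma defines].
  apply not_doubly_ordered_bool_le, defines.
  intros phi Gamma_phi.
  apply (valid_zigzag_image _ _ _ _ _ merge_leaves_zigzag1 merge_leaves_zigzag2
           _ merge_leaves_surjective).
  now apply defines; [exact fork_doubly_ordered|].
Qed.
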